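(* Let $(\Omega,\mathcal F)$ be a measurable space, $\mathcal X$ the set of bounded measurable functions, and $v$ a binary capacity with null set $\mathcal C_v=\{A\in\mathcal F: v(A)=0\}$. Then the Choquet integral $I_v:\mathcal X\to\mathbb R$ is convex (i.e. $I_v(\lambda X+(1-\lambda)Y)\le\lambda I_v(X)+(1-\lambda)I_v(Y)$ for all $\lambda\in[0,1]$, $X,Y\in\mathcal X$) if and only if $\mathcal C_v$ is closed under union (i.e. $A,B\in\mathcal C_v$ implies $A\cup B\in\mathcal C_v$).
   Context: A binary capacity is an increasing function $v:\mathcal F\to\{0,1\}$ (i.e. $v(A)\le v(B)$ for $A\subseteq B$) with $v(\varnothing)=0$, $v(\Omega)=1$. $I_v(X)=\int_{-\infty}^0(v(X\ge x)-1)\,\mathrm dx+\int_0^\infty v(X\ge x)\,\mathrm dx$. *)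

From HB Require Import structures.
From mathcomp Require Import all_boot all_order all_algebra.
From mathcomp Require Import all_classical all_reals all_analysis.
Set Implicit Arguments. Unset Strict Implicit. Unset Printing Implicit Defensive.
Import Order.TTheory GRing.Theory Num.Theory.
Local Open Scope classical_set_scope.
Local Open Scope ring_scope.

(* A binary capacity on the measurable space (T, F): a set function defined
   (meaningfully) on measurable sets, with values in {0,1}, increasing,
   v(empty) = 0 and v(Omega) = 1. Values on non-measurable sets are irrelevant. *)
Definition binary_capacity d (T : measurableType d) (R : realType)
  (v : set T -> R) : Prop :=
  [/\ (forall A, measurable A -> v A = 0 \/ v A = 1),
      (forall A B, measurable A -> measurable B -> A `<=` B -> v A <= v B),
      v set0 = 0 & v setT = 1].

Definition bounded_measurable d (T : measurableType d) (R : realType)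
  (X : T -> R) : Prop :=
  measurable_fun setT X /\ exists M : R, forall w, `|X w| <= M.

Definition choquet d (T : measurableType d) (R : realType)
  (v : set T -> R) (X : T -> R) : R :=
  Rintegral lebesgue_measure `]-oo, 0[%classic
    (fun x => v [set w | x <= X w] - 1)
  + Rintegral lebesgue_measure `[0, +oo[%classic
    (fun x => v [set w | x <= X w]).

Definition null_sets_union_closed d (T : measurableType d) (R : realType)
  (v : set T -> R) : Prop :=
  forall A B, measurable A -> measurable B -> v A = 0 -> v B = 0 ->
    v (A `|` B) = 0.

From HB Require Import structures.
From mathcomp Require Import all_boot all_order all_algebra.
From mathcomp Require Import all_classical all_reals all_analysis.
From mathcomp Require Import lra.
Import Order.TTheory GRing.Theory Num.Theory.
Local Open Scope classical_set_scope.
Local Open Scope ring_scope.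
Set Implicit Arguments. Unset Strict Implicit. Unset Printing Implicit Defensive.

(* For a binary capacity, x |-> v(X >= x) is a nonincreasing {0,1}-valued
   function, i.e. the indicator of a half-line ending at
   s = sup {x | v(X >= x) = 1}; the two integrals defining I_v then add up to
   s. So I_v(X) <= c as soon as X <= c off a v-null set, and c <= I_v(X) as
   soon as X >= c on a set of capacity 1.
   If null sets are closed under union, then off the null set
   {X >= I_v(X) + e} u {Y >= I_v(Y) + e} the convex combination is below
   l I_v(X) + (1 - l) I_v(Y) + e, which gives convexity. Conversely, if
   v(A) = v(B) = 0 but v(A u B) = 1, then I_v(1_A) = I_v(1_B) = 0 while
   I_v((1_A + 1_B)/2) >= 1/2. *)

Lemma Rintegral_halflines_indic (R : realType) (b : bool) (s : R) :
  Rintegral lebesgue_measure `]-oo, 0[%classic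
    (fun x => - \1_[set` Interval (BSide b s) +oo%O] x)
  + Rintegral lebesgue_measure `[0, +oo[%classic
    (fun x => \1_[set` Interval -oo%O (BSide b s)] x) = s.
Proof.
rewrite /Rintegral.
under eq_integral do rewrite EFinN.
rewrite integralN; last first.
  rewrite (_ : (\int[lebesgue_measure]_(x in `]-oo, 0%R[%classic)
      (fun x => (\1_[set` Interval (BSide b s) +oo%O] x)%:E)^\- x)%E = 0).
    by rewrite fin_num_adde_defl.
  rewrite -(integral0 lebesgue_measure `]-oo, 0%R[%classic).
  apply: eq_integral => x _; rewrite funenegE /= indicE.
  case: (_ \in _) => /=; last by rewrite oppr0 maxxx.
  by apply/max_idPr; rewrite lee_fin lerN10.
rewrite !integral_indic//; try exact: measurable_itv.
rewrite -!set_itvI /Order.meet/= joinx0 meet1x join0x meetx1 !lebesgue_measure_itv/=.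
by rewrite !lte_fin; case: ltrgtP => s0 /=; rewrite ?sub0r ?subr0 /=; lra.
Qed.

Lemma Rintegral_threshold (R : realType) (g : R -> R) (s : R) :
  (forall x, x < s -> g x = 1) -> (forall x, s < x -> g x = 0) ->
  g s = 0 \/ g s = 1 ->
  Rintegral lebesgue_measure `]-oo, 0[%classic (fun x => g x - 1)
  + Rintegral lebesgue_measure `[0, +oo[%classic g = s.
Proof.
move=> g1 g0 gs.
have [b gsb] : exists b : bool, g s = if b then 0 else 1.
  by case: gs => ->; [exists true | exists false].
rewrite -[RHS](Rintegral_halflines_indic b); congr (_ + _);
  apply: eq_Rintegral => x _; rewrite indicE mem_setE in_itv /= ?andbT;
  case: b gsb => gsb /=; case: (ltgtP x s) => [xs|sx|->];
  by rewrite ?(g1 _ xs) ?(g0 _ sx) ?gsb ?subrr ?oppr0 ?sub0r.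
Qed.

Lemma measurable_superlevel d (T : measurableType d) (R : realType)
    (X : T -> R) (x : R) :
  measurable_fun setT X -> measurable [set w | x <= X w].
Proof.
move=> mX; have -> : [set w | x <= X w] = X @^-1` `[x, +oo[%classic.
  by apply/seteqP; split=> w /=; rewrite in_itv /= andbT.
by rewrite -(setTI (X @^-1` _)); apply: mX => //; exact: measurable_itv.
Qed.

Lemma bounded_measurable_comb d (T : measurableType d) (R : realType)
    (l : R) (X Y : T -> R) :
  bounded_measurable X -> bounded_measurable Y ->
  bounded_measurable (fun w => l * X w + (1 - l) * Y w).
Proof.
move=> [mX [MX hX]] [mY [MY hY]]; split.
  rewrite (_ : (fun w => _) = (cst l \* X) \+ (cst (1 - l) \* Y)) //.
  by apply: measurable_realfun.measurable_funD; apply: measurable_realfun.measurable_funM => //; exact: measurable_cst.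
exists (`|l| * MX + `|1 - l| * MY) => w.
by rewrite (le_trans (ler_normD _ _)) // lerD // normrM ler_wpM2l.
Qed.

Lemma bounded_measurable_indic d (T : measurableType d) (R : realType)
    (A : set T) :
  measurable A -> bounded_measurable (\1_A : T -> R).
Proof.
move=> mA; split; first exact: measurable_realfun.measurable_indic.
by exists 1 => w; rewrite indicE; case: (w \in A); rewrite /= ?normr1 ?normr0.
Qed.

Definition choquet_convex d (T : measurableType d) (R : realType)
    (v : set T -> R) : Prop :=
  forall (l : R) (X Y : T -> R), 0 <= l <= 1 ->
    bounded_measurable X -> bounded_measurable Y ->
    choquet v (fun w => l * X w + (1 - l) * Y w)
      <= l * choquet v X + (1 - l) * choquet v Y.

Section binary_capacity.
Variables (d : measure_display) (T : measurableType d) (R : realType).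
Variable v : set T -> R.
Hypothesis hv : binary_capacity v.

Lemma binary_capacity_null_subset (A B : set T) : measurable A -> measurable B ->
  A `<=` B -> v B = 0 -> v A = 0.
Proof.
case: hv => vb vm _ _ mA mB AB vB; have := vm _ _ mA mB AB; rewrite vB.
by case: (vb _ mA) => -> //; rewrite ler10.
Qed.

Lemma binary_capacity_full_supset (A B : set T) : measurable A -> measurable B ->
  A `<=` B -> v A = 1 -> v B = 1.
Proof.
case: hv => vb vm _ _ mA mB AB vA; have := vm _ _ mA mB AB; rewrite vA.
by case: (vb _ mB) => -> //; rewrite ler10.
Qed.

Lemma has_sup_full_superlevels (X : T -> R) : bounded_measurable X ->
  has_sup [set x | v [set w | x <= X w] = 1].
Proof.
case: hv => _ _ v0 vT [_ [M hM]]; split.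
  exists (- M); rewrite /= (_ : [set w | _] = setT) //.
  apply/seteqP; split => w //= _.
  by have := hM w; rewrite ler_norml => /andP[].
exists M => x /=; apply: contraPP => /negP; rewrite -ltNge => Mx.
rewrite (_ : [set w | _] = set0) ?v0; last first.
  apply/seteqP; split => w //= xX.
  have := hM w; rewrite ler_norml => /andP[_ XM].
  by have := lt_le_trans Mx (le_trans xX XM); rewrite ltxx.
by move=> /eqP; rewrite eq_sym oner_eq0.
Qed.

Lemma choquet_binaryE (X : T -> R) : bounded_measurable X ->
  choquet v X = sup [set x | v [set w | x <= X w] = 1].
Proof.
move=> bX; have hS := has_sup_full_superlevels bX.
have mS x := measurable_superlevel x bX.1.
set g := fun x => v [set w | x <= X w].
have gb x : g x = 0 \/ g x = 1 by case: hv => vb _ _ _; exact: vb.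
set s := sup _.
apply: Rintegral_threshold (gb s) => x xs.
- have sx : 0 < s - x by rewrite subr_gt0.
  have [y Sy xy] := sup_adherent sx hS.
  apply: (binary_capacity_full_supset (mS y) (mS x) _ Sy) => w /=.
  by apply/le_trans/ltW; move: xy; rewrite -/s; lra.
- by case: (gb x) => // /(sup_upper_bound hS); rewrite -/s leNgt xs.
Qed.

Lemma le_choquet (X : T -> R) (F : set T) (c : R) :
  bounded_measurable X -> measurable F -> v F = 1 ->
  (forall w, F w -> c <= X w) -> c <= choquet v X.
Proof.
move=> bX mF vF FX; rewrite choquet_binaryE //.
apply: sup_upper_bound; first exact: has_sup_full_superlevels.
exact: binary_capacity_full_supset mF (measurable_superlevel c bX.1) FX vF.
Qed.

Lemma ge_choquet (X : T -> R) (N : set T) (c : R) :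
  bounded_measurable X -> measurable N -> v N = 0 ->
  (forall w, ~ N w -> X w <= c) -> choquet v X <= c.
Proof.
move=> bX mN vN NX; rewrite choquet_binaryE //.
apply: ge_sup; first exact: (has_sup_full_superlevels bX).1.
move=> x /=; apply: contraPP => /negP; rewrite -ltNge => cx.
rewrite (binary_capacity_null_subset (measurable_superlevel x bX.1) mN _ vN).
  by move=> /eqP; rewrite eq_sym oner_eq0.
move=> w /= xX; apply: contrapT => /NX Xc.
by have := lt_le_trans cx (le_trans xX Xc); rewrite ltxx.
Qed.

Lemma choquet_superlevel_null (X : T -> R) (e : R) : bounded_measurable X ->
  0 < e -> v [set w | choquet v X + e <= X w] = 0.
Proof.
move=> bX e0; have mXe := measurable_superlevel (choquet v X + e) bX.1.
case: hv => vb _ _ _; case: (vb _ mXe) => // vXe.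
by have := le_choquet bX mXe vXe (fun w => id); lra.
Qed.

Lemma null_sets_union_closed_of_convex :
  choquet_convex v -> null_sets_union_closed v.
Proof.
move=> conv A B mA mB vA vB; have mAB := measurableU _ _ mA mB.
case: hv => vb _ _ _; case: (vb _ mAB) => // vAB.
have bA := @bounded_measurable_indic _ _ R _ mA.
have bB := @bounded_measurable_indic _ _ R _ mB.
have cA : choquet v \1_A <= 0.
  by apply: ge_choquet bA mA vA _ => w nAw; rewrite indicE memNset.
have cB : choquet v \1_B <= 0.
  by apply: ge_choquet bB mB vB _ => w nBw; rewrite indicE memNset.
have cAB : 1 / 2 <= choquet v (fun w => 1 / 2 * \1_A w + (1 - 1 / 2) * \1_B w).
  apply: le_choquet (bounded_measurable_comb _ bA bB) mAB vAB _.
  move=> w /= [wA|wB]; rewrite !indicE ?(mem_set wA) ?(mem_set wB);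
    by case: (_ \in _) => /=; lra.
have half : 0 <= (1 / 2 : R) <= 1 by lra.
by have := conv _ _ _ half bA bB; lra.
Qed.

Lemma convex_of_null_sets_union_closed :
  null_sets_union_closed v -> choquet_convex v.
Proof.
move=> hU l X Y /andP[l0 l1] bX bY; apply/ler_addgt0Pr => e e0.
set a := choquet v X; set b := choquet v Y.
have mXa := measurable_superlevel (a + e) bX.1.
have mYb := measurable_superlevel (b + e) bY.1.
have vN := hU _ _ mXa mYb (choquet_superlevel_null bX e0)
  (choquet_superlevel_null bY e0).
apply: ge_choquet (bounded_measurable_comb _ bX bY) (measurableU _ _ mXa mYb)
  vN _ => w /not_orP[/negP + /negP]; rewrite -!ltNge => Xa Yb.
have lX : l * X w <= l * (a + e) by apply/ler_wpM2l/ltW.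
have lY : (1 - l) * Y w <= (1 - l) * (b + e).
  by apply/ler_wpM2l/ltW; rewrite // subr_ge0.
lra.
Qed.

End binary_capacity.

Theorem proposition4 (d : measure_display) (T : measurableType d)
  (R : realType) (v : set T -> R) :
  binary_capacity v ->
  ((forall (l : R) (X Y : T -> R), 0 <= l <= 1 ->
      bounded_measurable X -> bounded_measurable Y ->
      choquet v (fun w => l * X w + (1 - l) * Y w)
        <= l * choquet v X + (1 - l) * choquet v Y)
   <-> null_sets_union_closed v).
Proof.
move=> hv; split.
- exact: null_sets_union_closed_of_convex.
- exact: convex_of_null_sets_union_closed.
Qed.
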